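(* Let $\Lambda=(\mathcal{L}\subset\mathbb{R}^s,\mathbb{R}^n)$ be a generic cut-and-project scheme with associated matrix $L$ and with self-similarity $A\in\mathbb{R}^{n\times n}$, and let $B\in\mathbb{R}^{(s-n)\times(s-n)}$ and $C\in\mathbb{Z}^{s\times s}$ satisfy $\begin{pmatrix}A&O\\O&B\end{pmatrix}L=LC$. Then for every polynomial $p\in\mathbb{Z}[X]$, $p(A)=O$ if and only if $p(B)=O$.
   Context: A lattice $\mathcal{L}\subset\mathbb{R}^s$ is $\{L\mathbf{r}:\mathbf{r}\in\mathbb{Z}^s\}$ for a non-singular $L\in\mathbb{R}^{s\times s}$. For $1\le n<s$ the scheme $(\mathcal{L}\subset\mathbb{R}^s,\mathbb{R}^n)$ has projections $\pi_\parallel(\mathbf{x})=(x_1,\dots,x_n)^\top$, $\pi_\perp(\mathbf{x})=(x_{n+1},\dots,x_s)^\top$; it is generic if $\pi_\parallel|_{\mathcal{L}}$, $\pi_\perp|_{\mathcal{L}}$ are injective and $\pi_\perp(\mathcal{L})$ is dense in $\mathbb{R}^{s-n}$. $A$ is a self-similarity of a generic scheme if $A\pi_\parallel(\mathcal{L})\subset\pi_\parallel(\mathcal{L})$ and there exist $C\in\mathbb{Z}^{s\times s}$, $B$ real with $\begin{pmatrix}A&O\\O&B\end{pmatrix}L=LC$. *)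

From HB Require Import structures.
From mathcomp Require Import all_boot all_order all_algebra.
From mathcomp Require Import all_classical all_reals all_analysis.
Import numFieldNormedType.Exports.
Set Implicit Arguments. Unset Strict Implicit. Unset Printing Implicit Defensive.
Import Order.TTheory GRing.Theory Num.Theory.
Local Open Scope ring_scope.
Local Open Scope classical_set_scope.

(* Ambient space R^s with s = n + m (m = s - n), points are column vectors.
   pi_par x = first n coordinates, pi_perp x = last m coordinates. *)

Definition intmx (R : realType) (k l : nat) (M : 'M[int]_(k, l)) : 'M[R]_(k, l) :=
  map_mx (fun z : int => z%:~R) M.

Definition lattice (R : realType) (s : nat) (L : 'M[R]_s) : set 'cV[R]_s :=
  [set x | exists r : 'cV[int]_s, x = L *m intmx R r].

Definition pi_par (R : realType) (n m : nat) (x : 'cV[R]_(n + m)) : 'cV[R]_n :=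
  usubmx x.
Definition pi_perp (R : realType) (n m : nat) (x : 'cV[R]_(n + m)) : 'cV[R]_m :=
  dsubmx x.

Definition generic_cps (R : realType) (n m : nat) (L : 'M[R]_(n + m)) : Prop :=
  (0 < n)%N /\ (0 < m)%N /\ L \in unitmx /\
  (forall x y, lattice L x -> lattice L y -> pi_par x = pi_par y :> 'cV[R]_n -> x = y) /\
  (forall x y, lattice L x -> lattice L y -> pi_perp x = pi_perp y :> 'cV[R]_m -> x = y) /\
  @dense ('cV[R]_m : topologicalType) (@pi_perp R n m @` lattice L).

Definition self_similarity (R : realType) (n m : nat) (L : 'M[R]_(n + m))
    (A : 'M[R]_n) : Prop :=
  (fun x => A *m x) @` (@pi_par R n m @` lattice L) `<=` @pi_par R n m @` lattice L /\
  exists (C : 'M[int]_(n + m)) (B : 'M[R]_m),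
    block_mx A 0 0 B *m L = L *m intmx R C.

From HB Require Import structures.
From mathcomp Require Import all_boot all_order all_algebra.
From mathcomp Require Import all_classical all_reals all_analysis.
Import Order.TTheory GRing.Theory Num.Theory.
Import numFieldNormedType.Exports.
Local Open Scope ring_scope.

(* Put D = diag(A, B).  From D L = L C we get p(D) L = L p(C) for every
   integer polynomial p, so p(D) = diag(p(A), p(B)) maps the lattice into
   itself.  If p(A) = 0, then p(D) x and 0 are lattice points with the same
   projection to the physical space, hence p(D) x = 0 for every lattice point
   x; since the lattice spans R^s, p(D) = 0 and in particular p(B) = 0.  The
   converse is the same argument with the internal projection. *)

Set Implicit Arguments.

Section Lattice.

Variables (R : realType) (s : nat) (L : 'M[R]_s).

Lemma lattice0 : lattice L 0.
Proof. by exists 0; rewrite /intmx map_mx0 mulmx0. Qed.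

Lemma lattice_col j : lattice L (col j L).
Proof. by exists (delta_mx j 0); rewrite /intmx map_delta_mx colE. Qed.

Lemma lattice_mulmx (P : 'M[R]_s) (M : 'M[int]_s) x :
  P *m L = L *m intmx R M -> lattice L x -> lattice L (P *m x).
Proof.
by move=> PL [r ->]; exists (M *m r); rewrite mulmxA PL -mulmxA /intmx map_mxM.
Qed.

Lemma lattice_annihilator_eq0 k (P : 'M[R]_(k, s)) :
  L \in unitmx -> (forall x, lattice L x -> P *m x = 0) -> P = 0.
Proof.
move=> Lu P0; have PL0 : P *m L = 0.
  apply/matrixP => i j; have := P0 _ (lattice_col j).
  by rewrite colE mulmxA -colE => /(congr1 (fun v : 'cV_k => v i 0)); rewrite !mxE.
by rewrite -(mulmxK Lu P) PL0 mul0mx.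
Qed.

End Lattice.

Lemma horner_mx_intertwine (F : fieldType) k (L D E : 'M[F]_k.+1) q :
  L \in unitmx -> D *m L = L *m E ->
  horner_mx D q *m L = L *m horner_mx E q.
Proof.
move=> Lu DL; have -> : E = invmx L *m D *m L by rewrite -mulmxA DL mulKmx.
by rewrite horner_mx_uconjC // mulmxA mulKVmx.
Qed.

Lemma horner_mx_block_diag (R : comNzRingType) n m
    (A : 'M[R]_n.+1) (B : 'M[R]_m.+1) q :
  horner_mx (block_mx A 0 0 B) q = block_mx (horner_mx A q) 0 0 (horner_mx B q).
Proof.
elim/poly_ind: q => [|q c IH]; first by rewrite !rmorph0 block_mx0.
rewrite !rmorphD !rmorphM /= !horner_mx_X !horner_mx_C IH.
set hA := horner_mx A q; set hB := horner_mx B q.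
have -> : block_mx hA 0 0 hB * block_mx A 0 0 B = block_mx (hA * A) 0 0 (hB * B).
  by rewrite -!mulmxE mulmx_block !mulmx0 !mul0mx !addr0 !add0r.
by rewrite (scalar_mx_block n.+1 m.+1) (add_block_mx (hA * A)) !addr0.
Qed.

Lemma lattice_horner_mx (R : realType) k (L D : 'M[R]_k.+1) (C : 'M[int]_k.+1)
    (p : {poly int}) x :
  L \in unitmx -> D *m L = L *m intmx R C -> lattice L x ->
  lattice L (horner_mx D (map_poly (fun z : int => z%:~R) p) *m x).
Proof.
move=> Lu DL; apply: (lattice_mulmx (M := horner_mx C p)).
by rewrite (horner_mx_intertwine _ Lu DL) /intmx map_horner_mx.
Qed.

Section Projections.

Variables (R : realType) (n m : nat).
Variables (P : 'M[R]_n) (Q : 'M[R]_m) (x : 'cV[R]_(n + m)).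

Lemma pi_par_block_diag : pi_par (block_mx P 0 0 Q *m x) = P *m pi_par x.
Proof. by rewrite /pi_par -{1}[x]vsubmxK mul_block_col col_mxKu mul0mx addr0. Qed.

Lemma pi_perp_block_diag : pi_perp (block_mx P 0 0 Q *m x) = Q *m pi_perp x.
Proof. by rewrite /pi_perp -{1}[x]vsubmxK mul_block_col col_mxKd mul0mx add0r. Qed.

End Projections.

Theorem lemma1 (R : realType) (n m : nat) (L : 'M[R]_(n.+1 + m.+1))
    (A : 'M[R]_n.+1) (B : 'M[R]_m.+1) (C : 'M[int]_(n.+1 + m.+1)) :
  generic_cps L ->
  self_similarity L A ->
  block_mx A 0 0 B *m L = L *m intmx R C ->
  forall p : {poly int},
    horner_mx A (map_poly (fun z : int => z%:~R) p) = 0 <->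
    horner_mx B (map_poly (fun z : int => z%:~R) p) = 0.
Proof.
move=> [_ [_ [Lu [inj_par [inj_perp _]]]]] _ DL p.
set q := map_poly _ p.
(* n.+1 + m.+1 is a successor only after unfolding addn, so k is given. *)
have pD_stable := lattice_horner_mx (k := (n + m.+1)%N) p Lu DL.
have pD_block := horner_mx_block_diag A B q.
have pD0 : block_mx (horner_mx A q) 0 0 (horner_mx B q) = 0 ->
    horner_mx A q = 0 /\ horner_mx B q = 0.
  by rewrite -block_mx0 => /eq_block_mx [-> _ _ ->].
split=> pX0; [apply: (proj2 (pD0 _)) | apply: (proj1 (pD0 _))];
  rewrite -pD_block; apply: (lattice_annihilator_eq0 Lu) => x Lx.
- apply: inj_par; [exact: pD_stable | exact: lattice0 |].
  by rewrite pD_block pi_par_block_diag pX0 mul0mx /pi_par linear0.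
- apply: inj_perp; [exact: pD_stable | exact: lattice0 |].
  by rewrite pD_block pi_perp_block_diag pX0 mul0mx /pi_perp linear0.
Qed.
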